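(* Let $p$ be a prime and $N(x)=1+x+\dots+x^{p-1}$. Let $\mathfrak{K}$ be the $\mathbb{Z}/2$-graded ring generated by $u_0,u_1,u_2$ and $\alpha_{jk}$ for $j,k\in\{0,1,2\}$, $j\neq k$, subject to the relations $u_ju_k=\delta_{j,k}u_j$; $u_0+u_1+u_2=1$; $u_j\alpha_{jk}u_k=\alpha_{jk}$; $\alpha_{jk}\alpha_{km}=0$ whenever $\{j,k,m\}=\{0,1,2\}$; $\alpha_{01}\alpha_{10}=N(u_0-\alpha_{02}\alpha_{20})$; $\alpha_{10}\alpha_{01}=N(u_1-\alpha_{12}\alpha_{21})$; $p\,u_2=N(u_2-\alpha_{20}\alpha_{02})+N(u_2-\alpha_{21}\alpha_{12})$; where $\alpha_{12},\alpha_{21}$ are odd and all other generators even (polynomials $N(x)$ in an element $x$ of the corner $u_j\mathfrak{K}u_j$ are formed with $u_j$ as unit). Then there is a unique ring anti-automorphism $x\mapsto x^*$ of $\mathfrak{K}$ with $u_j^*=u_j$ and $\alpha_{jk}^*=\alpha_{kj}$ for all $j,k\in\{0,1,2\}$ with $j\neq k$. It is grading-preserving and involutive.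
   Context: The ring $\mathfrak{K}$ so presented is (by a result of the paper) isomorphic to Köhler's ring $\mathrm{KK}^G_*(B,B)^{\mathrm{op}}$ for $G=\mathbb{Z}/p$ and $B=\mathbb{C}\oplus\mathrm{C}(G)\oplus D$, $D$ the mapping cone of the unit map $\mathbb{C}\to\mathrm{C}(G)$; the statement concerns the ring with the presentation given. *)

From HB Require Import structures.
From mathcomp Require Import all_boot all_order all_algebra.
Set Implicit Arguments. Unset Strict Implicit. Unset Printing Implicit Defensive.
Import Order.TTheory GRing.Theory.
Local Open Scope ring_scope.

Definition i0 : 'I_3 := @Ordinal 3 0 isT.
Definition i1 : 'I_3 := @Ordinal 3 1 isT.
Definition i2 : 'I_3 := @Ordinal 3 2 isT.

(* N(x) = 1 + x + ... + x^(p-1), formed in the corner ring with unit e. *)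
Definition Ncorner (R : pzRingType) (p : nat) (e x : R) : R :=
  e + \sum_(1 <= i < p) x ^+ i.

(* The defining relations of the ring K, for elements u_j and alpha_jk
   (only the alpha_jk with j != k are generators; diagonal values are ignored). *)
Definition K_relations (R : pzRingType) (p : nat)
    (u : 'I_3 -> R) (a : 'I_3 -> 'I_3 -> R) : Prop :=
  [/\ (forall j k, u j * u k = if j == k then u j else 0),
      u i0 + u i1 + u i2 = 1,
      (forall j k, j != k -> u j * a j k * u k = a j k)
    & (forall j k m, j != k -> k != m -> j != m -> a j k * a k m = 0)] /\
  [/\ a i0 i1 * a i1 i0 = Ncorner p (u i0) (u i0 - a i0 i2 * a i2 i0),
      a i1 i0 * a i0 i1 = Ncorner p (u i1) (u i1 - a i1 i2 * a i2 i1)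
    & p%:R * u i2 = Ncorner p (u i2) (u i2 - a i2 i0 * a i0 i2)
                    + Ncorner p (u i2) (u i2 - a i2 i1 * a i1 i2)].

Definition ring_hom (R S : pzRingType) (f : R -> S) : Prop :=
  [/\ forall x y, f (x + y) = f x + f y,
      forall x y, f (x * y) = f x * f y
    & f 1 = 1].

Definition ring_antiauto (R : pzRingType) (f : R -> R) : Prop :=
  [/\ forall x y, f (x + y) = f x + f y,
      forall x y, f (x * y) = f y * f x,
      f 1 = 1
    & bijective f].

(* (K, u, a) is the ring presented by the generators u_j, alpha_jk and the
   relations K_relations: the initial ring among rings equipped with
   elements satisfying the relations (universal property). *)
Definition is_K_presentation (p : nat) (K : pzRingType)
    (u : 'I_3 -> K) (a : 'I_3 -> 'I_3 -> K) : Prop :=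
  K_relations p u a /\
  forall (R : pzRingType) (v : 'I_3 -> R) (b : 'I_3 -> 'I_3 -> R),
    K_relations p v b ->
    (exists f : K -> R, ring_hom f /\ (forall j, f (u j) = v j) /\
        (forall j k, j != k -> f (a j k) = b j k)) /\
    (forall f g : K -> R, ring_hom f -> ring_hom g ->
        (forall j, f (u j) = v j) -> (forall j, g (u j) = v j) ->
        (forall j k, j != k -> f (a j k) = b j k) ->
        (forall j k, j != k -> g (a j k) = b j k) ->
        f =1 g).

Definition alpha_parity (j k : 'I_3) : bool :=
  ((j == i1) && (k == i2)) || ((j == i2) && (k == i1)).

(* homog u a d x : x lies in the degree-d part of the Z/2-grading of K
   determined by the parities of the generators, i.e. the additive span of
   monomials in the generators of total parity d. *)
Inductive homog (K : pzRingType) (u : 'I_3 -> K) (a : 'I_3 -> 'I_3 -> K)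
  : bool -> K -> Prop :=
| homog_u j : homog u a false (u j)
| homog_a j k : j != k -> homog u a (alpha_parity j k) (a j k)
| homog_1 : homog u a false 1
| homog_0 d : homog u a d 0
| homog_add d x y : homog u a d x -> homog u a d y -> homog u a d (x + y)
| homog_opp d x : homog u a d x -> homog u a d (- x)
| homog_mul d e x y : homog u a d x -> homog u a e y -> homog u a (addb d e) (x * y).

From HB Require Import structures.
From mathcomp Require Import all_boot all_order all_algebra.
Set Implicit Arguments. Unset Strict Implicit. Unset Printing Implicit Defensive.
Import GRing.Theory.
Local Open Scope ring_scope.

(* In the converse ring [K^c] the relations hold with [alpha_jk] and
   [alpha_kj] exchanged, so the universal property yields a ring morphism
   [K -> K^c], i.e. an anti-endomorphism [*] of [K] with [u_j* = u_j] and
   [alpha_jk* = alpha_kj].  Then [**] is an endomorphism of [K] fixing every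
   generator, hence the identity by the uniqueness half of the universal
   property; so [*] is an involutive anti-automorphism.  Any other such
   anti-automorphism is a second morphism [K -> K^c] with the same values on
   the generators, hence equals [*].  Since [alpha_parity] is symmetric,
   [*] maps generators to generators of the same parity and therefore
   preserves the grading. *)

Lemma Ncorner_converse (R : pzRingType) (p : nat) (e x : R) :
  @Ncorner R^c p e x = Ncorner p e x.
Proof. by rewrite /Ncorner; congr (_ + _); apply: eq_bigr => i _; rewrite revrX. Qed.

Lemma K_relations_converse (R : pzRingType) (p : nat)
    (u : 'I_3 -> R) (a : 'I_3 -> 'I_3 -> R) :
  K_relations p u a -> @K_relations R^c p u (fun j k => a k j).
Proof.
move=> [[uM u_sum uau aa] [N01 N10 N2]]; split; split => //=.
- move=> j k; change (u k * u j = if j == k then u j else 0).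
  by rewrite uM eq_sym; case: eqP => // ->.
- move=> j k jk; change (u k * (a k j * u j) = a k j).
  by rewrite mulrA uau // eq_sym.
- move=> j k m jk km jm; change (a m k * a k j = 0).
  by rewrite aa // eq_sym.
- by rewrite Ncorner_converse.
- by rewrite Ncorner_converse.
- rewrite !Ncorner_converse -N2.
  by change (u i2 * p%:R = p%:R * u i2); rewrite mulr_natr mulr_natl.
Qed.

Lemma add_morph0 (U V : zmodType) (f : U -> V) :
  {morph f : x y / x + y} -> f 0 = 0.
Proof. by move=> fD; apply: (@addrI _ (f 0)); rewrite -fD !addr0. Qed.

Lemma add_morphN (U V : zmodType) (f : U -> V) :
  {morph f : x y / x + y} -> {morph f : x / - x}.
Proof. by move=> fD x; apply/esym/addr0_eq; rewrite -fD subrr (add_morph0 fD). Qed.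

Lemma ring_antihom_comp (R : pzRingType) (f g : R -> R) :
  @ring_hom R R^c f -> @ring_hom R R^c g -> ring_hom (f \o g).
Proof.
move=> [fD fM f1] [gD gM g1]; split=> [x y|x y|] /=.
- by rewrite gD fD.
- by rewrite gM fM.
- by rewrite g1 f1.
Qed.

Lemma ring_antiauto_involutive (R : pzRingType) (f : R -> R) :
  @ring_hom R R^c f -> involutive f -> ring_antiauto f.
Proof. by move=> [fD fM f1] ff; split => //; exists f. Qed.

Lemma alpha_parityC (j k : 'I_3) : alpha_parity j k = alpha_parity k j.
Proof. by rewrite /alpha_parity orbC [(k == i1) && _]andbC [(k == i2) && _]andbC. Qed.

Lemma homog_transpose (K : pzRingType) (u : 'I_3 -> K) (a : 'I_3 -> 'I_3 -> K)
    (f : K -> K) :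
  @ring_hom K K^c f -> (forall j, f (u j) = u j) ->
  (forall j k, j != k -> f (a j k) = a k j) ->
  forall d x, homog u a d x -> homog u a d (f x).
Proof.
move=> [fD fM f1] fu fa d x; elim=> {d x}.
- by move=> j; rewrite fu; apply: homog_u.
- by move=> j k jk; rewrite fa // alpha_parityC; apply: homog_a; rewrite eq_sym.
- by rewrite f1; apply: homog_1.
- by move=> d; rewrite (add_morph0 fD); apply: homog_0.
- by move=> d x y _ hx _ hy; rewrite fD; apply: homog_add.
- by move=> d x _ hx; rewrite (add_morphN fD); apply: homog_opp.
- by move=> d e x y _ hx _ hy; rewrite fM addbC; apply: homog_mul.
Qed.

Theorem proposition5p11 (p : nat) (hp : prime p) (K : pzRingType)
    (u : 'I_3 -> K) (a : 'I_3 -> 'I_3 -> K)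
    (HK : is_K_presentation p u a) :
  exists f : K -> K,
    [/\ ring_antiauto f,
        (forall j, f (u j) = u j)
      & (forall j k, j != k -> f (a j k) = a k j)] /\
    [/\ (forall g : K -> K, ring_antiauto g ->
           (forall j, g (u j) = u j) ->
           (forall j k, j != k -> g (a j k) = a k j) -> g =1 f),
        (forall d x, homog u a d x -> homog u a d (f x))
      & (forall x, f (f x) = x)].
Proof.
case: HK => rel univ.
have [[f [f_hom [fu fa]]] f_unique] := univ _ _ _ (K_relations_converse rel).
have [_ id_unique] := univ _ _ _ rel.
have ff : involutive f.
  have fu2 j : f (f (u j)) = u j by rewrite !fu.
  have fa2 j k : j != k -> f (f (a j k)) = a j k by move=> jk; rewrite !fa // eq_sym.
  by move=> x; apply: (id_unique (f \o f) id) => //; apply: ring_antihom_comp.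
exists f; split; first by split => //; apply: ring_antiauto_involutive.
split => //; last exact: homog_transpose.
by move=> g [gD gM g1 _] gu ga; apply: f_unique.
Qed.
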